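(* Assume $K$ is a field and $\tau_{(i)}\neq0$, $\eta_{(i)}\neq-1_K$ for all $i\in\Omega$. Then the following are equivalent: (1) for any $C,D\in\mathcal{I}(\overline{\mathbf{P}})$, $|C|=|D|$ implies $\pi(\Omega,C)=\pi(\Omega,D)$; (2) for any $C,D\in\mathcal{I}(\overline{\mathbf{P}})$, $\pi(\Omega,C)=\pi(\Omega,D)$ if and only if $|C|=|D|$; (3) $\mathbf{P}$ is hierarchical, and for any $u,v\in\Omega$ with $\mathrm{len}(u)=\mathrm{len}(v)$ we have $\eta_{(u)}=\eta_{(v)}$.
   Context: $\Omega$ is a finite set and $\mathbf{P}=(\Omega,\preccurlyeq_{\mathbf{P}})$ a poset; $\overline{\mathbf{P}}$ is its dual poset, and $\mathcal{I}(\overline{\mathbf{P}})$ is the set of ideals of $\overline{\mathbf{P}}$ (up-closed subsets of $\mathbf{P}$). For $Y\subseteq\Omega$: $\max(Y)$ is the set of maximal elements of $Y$ w.r.t. $\preccurlyeq_{\mathbf{P}}$ and $\mathcal{I}(Y)$ is the set of down-closed subsets of $Y$ with the induced order. $\tau,\eta\in K^{\Omega}$. For $D,I\subseteq\Omega$, $\varphi(D,I)=(-1)^{|I\cap D|}\big(\prod_{i\in I-\max(I)}\tau_{(i)}\big)\big(\prod_{i\in\max(I)-D}\eta_{(i)}\big)$ if $I\cap D\subseteq\max(I)$, and $0$ otherwise; for $D\subseteq Y\subseteq\Omega$, $\pi(Y,D)=\sum_{I\in\mathcal{I}(Y)}\varphi(D,I)x^{|I|}\in K[x]$. $\mathrm{len}(y)$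 is the largest cardinality of a chain in $\mathbf{P}$ with greatest element $y$; $\mathbf{P}$ is hierarchical if $\mathrm{len}(u)+1\leqslant\mathrm{len}(v)$ implies $u\preccurlyeq_{\mathbf{P}}v$. *)

From HB Require Import structures.
From mathcomp Require Import all_boot all_order all_algebra.
Set Implicit Arguments. Unset Strict Implicit. Unset Printing Implicit Defensive.
Import Order.TTheory GRing.Theory.
Local Open Scope ring_scope.

Section PosetDefs.
Variables (d : Order.disp_t) (T : finPOrderType d).

Definition downclosed_in (Y I : {set T}) : bool :=
  (I \subset Y) && [forall i in I, forall j in Y, (j <= i)%O ==> (j \in I)].

(* ideals of the dual poset: up-closed subsets of Omega *)
Definition upclosed (C : {set T}) : bool :=
  [forall i in C, forall j, (i <= j)%O ==> (j \in C)].

Definition maxs (Y : {set T}) : {set T} :=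
  [set i in Y | [forall j in Y, ~~ (i < j)%O]].

Variables (K : fieldType) (tau eta : T -> K).

Definition phi (D I : {set T}) : K :=
  if I :&: D \subset maxs I then
    (-1) ^+ #|I :&: D| * (\prod_(i in I :\: maxs I) tau i)
      * (\prod_(i in maxs I :\: D) eta i)
  else 0.

Definition pi_poly (Y D : {set T}) : {poly K} :=
  \sum_(I : {set T} | downclosed_in Y I) phi D I *: 'X^#|I|.

End PosetDefs.

Section Len.
Variables (d : Order.disp_t) (T : finPOrderType d).

Definition is_chain (C : {set T}) : bool :=
  [forall x in C, forall y in C, (x <= y)%O || (y <= x)%O].

Definition len (y : T) : nat :=
  (\max_(C : {set T} | [&& is_chain C, y \in C & [forall c in C, (c <= y)%O]])
     #|C|)%N.

Definition hierarchical : Prop :=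
  forall u v : T, (len u + 1 <= len v)%N -> (u <= v)%O.
End Len.

From HB Require Import structures.
From mathcomp Require Import all_boot all_order all_algebra.
From mathcomp Require Import zify.
Set Implicit Arguments. Unset Strict Implicit. Unset Printing Implicit Defensive.
Import Order.TTheory GRing.Theory.
Local Open Scope ring_scope.

(* Induction on the levels of the poset: strip the set L := mins Y of minimal
   elements of Y.  When every element of L lies below every element of Y \ L
   ([mins_below Y]), an ideal of Y is either a subset of L or L :|: I with I a
   nonempty ideal of Y \ L, which gives
     pi(Y, D) = \prod_(i in L) (1 + etaD D i X)                if D meets L,
     pi(Y, D) = \prod_(i in L) (1 + eta i X)
                + (\prod_(i in L) tau i) X^|L| (pi(Y \ L, D) - 1)   otherwise.
   (1) => (3): the coefficient of X is \sum_(i in L) etaD D i; comparing it for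
   suitable up-sets of equal size shows that L lies below Y \ L (as eta <> -1)
   and that eta is constant on L, and cancelling the nonzero factor
   (\prod tau) X^|L| transfers (1) to Y \ L.
   (3) => (2): if eta = e on L, an up-set C meeting L gives
   (1 - X)^|L :&: C| (1 + e X)^|L :\: C|, whose root 1 has multiplicity
   |L :&: C|, and |C| = |Y \ L| + |L :&: C|.  An up-set avoiding L has at most
   |Y \ L| elements, and its polynomial agrees with (1 + e X)^|L| below degree
   |L| + 1, so it cannot have the former shape, which has degree at most |L|
   and vanishes at 1. *)

Section LinearFactors.
Variable K : fieldType.

Lemma prod_lin_subsets (I : finType) (A : {set I}) (g : I -> K) :
  \prod_(i in A) (1 + g i *: 'X) =
  \sum_(S : {set I} | S \subset A) (\prod_(i in S) g i) *: 'X^#|S| :> {poly K}.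
Proof.
rewrite big_mkcond [RHS]big_mkcond /=.
rewrite (eq_bigr (fun i => (if i \in A then g i *: 'X else 0) + 1)) => [|i _];
  last by case: ifP; rewrite ?add0r // addrC.
rewrite bigA_distr; apply: eq_bigr => S _; rewrite -big_mkcond /=.
case: ifP => [SA | /subsetPn[i iS iA]]; last by rewrite (bigD1 i) //= (negbTE iA) mul0r.
rewrite (eq_bigr (fun i => g i *: 'X)) => [|i iS]; last by rewrite (subsetP SA).
by rewrite scaler_prod prodr_const.
Qed.

Lemma size_lin_exp (a : K) n : (size ((1 + a *: 'X) ^+ n)%R <= n.+1)%N.
Proof.
have lin : (size (1 + a *: 'X)%R <= 2)%N.
  apply: leq_trans (size_polyD _ _) _; rewrite size_poly1 geq_max /=.
  by apply: leq_trans (size_scale_leq _ _) _; rewrite size_polyX.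
by apply: leq_trans (size_poly_exp_leq _ _) _; rewrite ltnS; nia.
Qed.

Lemma size_lin_exp2 (x e : K) a b :
  (size ((1 + x *: 'X) ^+ a * (1 + e *: 'X) ^+ b)%R <= (a + b).+1)%N.
Proof.
apply: leq_trans (size_polyMleq _ _) _.
by have := leq_add (size_lin_exp x a) (size_lin_exp e b); lia.
Qed.

Lemma mup1_lin_exp2 (e : K) a b : e != -1 ->
  mup 1 ((1 + (-1) *: 'X) ^+ a * (1 + e *: 'X) ^+ b) = a.
Proof.
move=> e1; have -> : 1 + (-1) *: 'X = - ('X - (1 : K)%:P) :> {poly K}.
  by rewrite scaleN1r opprB addrC.
rewrite exprNn mupMl -?mulrA ?mupMr ?mup_XsubCX ?eqxx // rootE !hornerE.
  by rewrite signr_eq0.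
by rewrite expf_eq0 addrC addr_eq0 (negbTE e1) andbF.
Qed.

Lemma mulXn_eq0 (q : {poly K}) m :
  (size (q * 'X^m)%R <= m.+1)%N -> q`_0 = 0 -> q = 0.
Proof.
move=> sz q0; apply/eqP; apply: contraTT sz => qn0; rewrite -ltnNge size_mulXn //.
suff : (1 < size q)%N by lia.
by rewrite ltnNge; apply: contra qn0 => /size1_polyC ->; rewrite q0.
Qed.

Lemma lin_exp_shift_neq (e c : K) m a b (p : {poly K}) :
  e != -1 -> p`_0 = 0 -> (0 < a)%N -> (a + b = m)%N ->
  (1 + e *: 'X) ^+ m + (c *: 'X^m) * p != (1 + (-1) *: 'X) ^+ a * (1 + e *: 'X) ^+ b.
Proof.
move=> e1 p0 a0 abm; apply/eqP => E.
have cp0 : c *: p = 0.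
  apply: (@mulXn_eq0 _ m); last by rewrite coefZ p0 mulr0.
  rewrite -scalerAl mulrC scalerAl (canRL (addKr _) E) addrC.
  apply: leq_trans (size_polyD _ _) _; rewrite size_polyN geq_max.
  by rewrite size_lin_exp -abm size_lin_exp2.
move: E; rewrite -scalerAl scalerAr cp0 mulr0 addr0 => /(congr1 (horner^~ 1)) /=.
rewrite !hornerE subrr expr0n (gtn_eqF a0) mul0r => /eqP.
by rewrite expf_eq0 addrC addr_eq0 (negbTE e1) andbF.
Qed.

End LinearFactors.

Section MinimalElements.
Variables (d : Order.disp_t) (T : finPOrderType d).
Implicit Types (Y I S : {set T}) (u v z : T).

Definition mins Y : {set T} := [set u in Y | [forall z in Y, ~~ (z < u)%O]].

Lemma minsP Y u :
  reflect (u \in Y /\ forall z, z \in Y -> ~~ (z < u)%O) (u \in mins Y).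
Proof. by rewrite inE; apply: (iffP andP) => -[uY /forall_inP]. Qed.

Lemma maxsP Y u :
  reflect (u \in Y /\ forall z, z \in Y -> ~~ (u < z)%O) (u \in maxs Y).
Proof. by rewrite inE; apply: (iffP andP) => -[uY /forall_inP]. Qed.

Lemma mins_sub Y : mins Y \subset Y.
Proof. by apply/subsetP => u /minsP[]. Qed.

Lemma maxs_sub Y : maxs Y \subset Y.
Proof. by apply/subsetP => u /maxsP[]. Qed.

Lemma mins_le_eq Y u z : u \in mins Y -> z \in Y -> (z <= u)%O -> z = u.
Proof.
case/minsP => _ minu zY zu; apply/eqP.
by move: (minu z zY); rewrite lt_def zu andbT negbK eq_sym.
Qed.

Lemma mins_neq0 Y : Y != set0 -> mins Y != set0.
Proof.
case/set0Pn => y0 y0Y; apply/set0Pn.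
have [u uY minu] := arg_minnP (fun u => #|[set z in Y | (z < u)%O]|) y0Y.
exists u; apply/minsP; split=> // z zY; apply/negP => zu.
have := minu z zY; rewrite leqNgt => /negP; apply; apply: proper_card.
apply/properP; split; last by exists z; rewrite !inE ?zY ?zu ?ltxx.
by apply/subsetP => w; rewrite !inE => /andP[-> wz]; apply: lt_trans wz zu.
Qed.

Lemma card_setD_mins Y : Y != set0 -> (#|Y :\: mins Y| < #|Y|)%N.
Proof.
move/mins_neq0/set0Pn => [u uL]; apply: proper_card; apply/properP.
by split; [exact: subsetDl | exists u; [exact: subsetP (mins_sub Y) u uL | rewrite inE uL]].
Qed.

Lemma maxs_sub_mins Y S : S \subset mins Y -> maxs S = S.
Proof.
move/subsetP=> SL; apply/setP => u; apply/maxsP/idP => [[] // | uS].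
split=> // z zS; apply/negP => uz.
have uY := subsetP (mins_sub Y) u (SL u uS).
by move: (uz); rewrite (mins_le_eq (SL z zS) uY (ltW uz)) ltxx.
Qed.

Definition mins_below Y : Prop :=
  forall u v, u \in mins Y -> v \in Y :\: mins Y -> (u <= v)%O.

End MinimalElements.

Section Lengths.
Variables (d : Order.disp_t) (T : finPOrderType d).
Implicit Types (Y C : {set T}) (y : T).

Definition len_in Y y : nat :=
  (\max_(C : {set T} | [&& C \subset Y, is_chain C, y \in C & [forall c in C, (c <= y)%O]])
     #|C|)%N.

Lemma len_inT y : len_in setT y = len y.
Proof. by apply: eq_bigl => C; rewrite subsetT. Qed.

Lemma chainP C :
  reflect (forall x z, x \in C -> z \in C -> (x <= z)%O || (z <= x)%O) (is_chain C).
Proof.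
apply: (iffP forall_inP) => [chC x z xC zC | chC x xC].
  by move/forall_inP: (chC x xC) => /(_ z zC).
by apply/forall_inP => z zC; apply: chC.
Qed.

Lemma len_in_ge Y C y : C \subset Y -> is_chain C -> y \in C ->
  (forall c, c \in C -> (c <= y)%O) -> (#|C| <= len_in Y y)%N.
Proof.
move=> CY chC yC Cy; apply: (@leq_bigmax_cond _ _ (fun C : {set T} => #|C|) C).
by rewrite CY chC yC; apply/forall_inP.
Qed.

Lemma len_in_le Y y n :
  (forall C, C \subset Y -> is_chain C -> y \in C ->
     (forall c, c \in C -> (c <= y)%O) -> (#|C| <= n)%N) ->
  (len_in Y y <= n)%N.
Proof. by move=> ub; apply/bigmax_leqP => C /and4P[CY chC yC /forall_inP]; apply: ub. Qed.

Lemma len_in_gt0 Y y : y \in Y -> (0 < len_in Y y)%N.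
Proof.
move=> yY; rewrite -(cards1 y); apply: len_in_ge; rewrite ?sub1set ?set11 //.
  by apply/chainP => x z /set1P-> /set1P->; rewrite lexx.
by move=> c /set1P->.
Qed.

Lemma card_chain_mins Y C : C \subset Y -> is_chain C -> (#|C :&: mins Y| <= 1)%N.
Proof.
move=> CY /chainP chC; apply/card_le1_eqP => a b /setIP[aC aL] /setIP[bC bL].
have [ab | ba] := orP (chC a b aC bC).
  by rewrite (mins_le_eq bL (subsetP CY a aC) ab).
by rewrite (mins_le_eq aL (subsetP CY b bC) ba).
Qed.

Lemma len_in_mins Y y : y \in mins Y -> len_in Y y = 1%N.
Proof.
move=> yL; apply/eqP; rewrite eqn_leq len_in_gt0 ?(subsetP (mins_sub Y)) // andbT.
apply: len_in_le => C CY _ yC Cy; rewrite -(cards1 y); apply: subset_leq_card.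
by apply/subsetP => c cC; rewrite inE (mins_le_eq yL (subsetP CY c cC) (Cy c cC)).
Qed.

Lemma len_in_nonmin Y y : y \in Y :\: mins Y -> (1 < len_in Y y)%N.
Proof.
case/setDP => yY; rewrite inE yY negb_forall_in => /exists_inP[z zY].
rewrite negbK => zy; have zy' := ltW zy.
have <- : #|[set z; y]| = 2%N by rewrite cards2 (lt_eqF zy).
apply: len_in_ge; last by move=> c /set2P[|] ->; rewrite ?lexx.
- by apply/subsetP => c /set2P[|] ->.
- by apply/chainP => a b /set2P[|] -> /set2P[|] ->; rewrite ?lexx ?zy' ?orbT.
- by rewrite !inE eqxx orbT.
Qed.

Lemma len_in_setD_mins_le Y y : y \in Y :\: mins Y ->
  (len_in Y y <= (len_in (Y :\: mins Y) y).+1)%N.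
Proof.
move=> yY'; apply: len_in_le => C CY chC yC Cy.
rewrite -(cardsID (mins Y) C) addnC -addn1 leq_add ?card_chain_mins //.
apply: len_in_ge; first exact: setSD.
- by apply/chainP => a b /setDP[aC _] /setDP[bC _]; move/chainP: chC; apply.
- by rewrite inE yC; case/setDP: yY' => _ ->.
- by move=> c /setDP[cC _]; apply: Cy.
Qed.

Lemma len_in_setD_mins_lt Y y : mins_below Y -> y \in Y :\: mins Y ->
  (len_in (Y :\: mins Y) y < len_in Y y)%N.
Proof.
move=> below yY'; have [yY _] := setDP yY'.
have /set0Pn[u uL] : mins Y != set0 by apply/mins_neq0/set0Pn; exists y.
have uY := subsetP (mins_sub Y) u uL; have len_gt0 := len_in_gt0 yY.
rewrite -(prednK len_gt0) ltnS; apply: len_in_le => C CY' chC yC Cy.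
have [CY CL] := subsetDP CY'; rewrite -ltnS prednK //.
have <- : #|u |: C| = #|C|.+1 by rewrite cardsU1 (disjointFl CL uL).
have ubelow c : c \in C -> (u <= c)%O by move=> cC; apply: below u c uL (subsetP CY' c cC).
apply: len_in_ge.
- by rewrite subUset sub1set uY.
- apply/chainP => a b /setU1P[-> | aC] /setU1P[-> | bC]; rewrite ?lexx ?ubelow //.
    by rewrite orbT.
  by move/chainP: chC; apply.
- by rewrite !inE yC orbT.
- by move=> c /setU1P[-> | cC]; [apply: ubelow | apply: Cy].
Qed.

Lemma len_in_setD_mins Y y : mins_below Y -> y \in Y :\: mins Y ->
  len_in Y y = (len_in (Y :\: mins Y) y).+1.
Proof.
move=> below yY'; apply/eqP; rewrite eqn_leq len_in_setD_mins_le //.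
exact: len_in_setD_mins_lt.
Qed.

End Lengths.

Section IdealDecomposition.
Variables (d : Order.disp_t) (T : finPOrderType d) (K : fieldType)
  (tau eta : T -> K).
Implicit Types (Y D I S : {set T}) (u v : T).

Lemma downclosed_inP Y I :
  reflect (I \subset Y /\ forall i j, i \in I -> j \in Y -> (j <= i)%O -> j \in I)
    (downclosed_in Y I).
Proof.
apply: (iffP andP) => -[IY Idc]; split=> //.
  by move=> i j iI jY; move/forall_inP: Idc => /(_ i iI) /forall_inP /(_ j jY) /implyP.
by apply/forall_inP => i iI; apply/forall_inP => j jY; apply/implyP; apply: Idc.
Qed.

Lemma downclosed_sub_mins Y I : I \subset mins Y -> downclosed_in Y I.
Proof.
move=> IL; apply/downclosed_inP; split; first exact: subset_trans IL (mins_sub Y).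
by move=> i j iI jY ji; rewrite (mins_le_eq (subsetP IL i iI) jY ji).
Qed.

Lemma mins_sub_downclosed Y I : mins_below Y -> downclosed_in Y I ->
  ~~ (I \subset mins Y) -> mins Y \subset I.
Proof.
move=> below /downclosed_inP[IY Idc] /subsetPn[v vI vL].
have vY' : v \in Y :\: mins Y by rewrite inE vL (subsetP IY).
by apply/subsetP => u uL; apply: Idc vI (subsetP (mins_sub Y) u uL) (below u v uL vY').
Qed.

Lemma downclosed_minsU Y I : [disjoint I & mins Y] ->
  downclosed_in Y (mins Y :|: I) = downclosed_in (Y :\: mins Y) I.
Proof.
move=> IL; apply/downclosed_inP/downclosed_inP => -[IY Idc]; split.
- apply/subsetP => i iI; rewrite inE (disjointFr IL iI).
  by rewrite (subsetP IY) // inE iI orbT.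
- move=> i j iI /setDP[jY jL] ji.
  have iLI : i \in mins Y :|: I by rewrite inE iI orbT.
  by move: (Idc i j iLI jY ji); rewrite inE (negbTE jL).
- by rewrite subUset mins_sub (subset_trans IY) ?subsetDl.
- move=> i j; rewrite !in_setU => /orP[iL | iI] jY ji.
    by rewrite (mins_le_eq iL jY ji) iL.
  by case jL: (j \in mins Y) => //=; apply: Idc iI _ ji; rewrite in_setD jL.
Qed.

Lemma maxs_minsU Y I : mins_below Y -> I \subset Y :\: mins Y -> I != set0 ->
  maxs (mins Y :|: I) = maxs I.
Proof.
move=> below IY /set0Pn[v vI]; have [vY vL] := setDP (subsetP IY v vI).
apply/setP => x; apply/maxsP/maxsP => -[xLI maxx].
  have xI : x \in I.
    case/setUP: xLI => // xL; have xv := below x v xL (subsetP IY v vI).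
    move: (maxx v); rewrite inE vI orbT lt_def xv andbT negbK => /(_ isT) /eqP vx.
    by rewrite vx xL in vL.
  by split=> // z zI; apply: maxx; rewrite inE zI orbT.
split; first by rewrite inE xLI orbT.
move=> z /setUP[zL | zI]; last exact: maxx.
by case/minsP: zL => _; apply; case/setDP: (subsetP IY x xLI).
Qed.

Definition etaD D i := if i \in D then -1 else eta i.

Lemma phi_antichain D S : maxs S = S -> phi tau eta D S = \prod_(i in S) etaD D i.
Proof.
move=> maxS; rewrite /phi maxS subsetIl setDv big_set0 mulr1 [RHS](bigID (mem D)) /=.
congr (_ * _).
  rewrite (eq_bigr (fun=> -1)) => [|i /andP[_ iD]]; last by rewrite /etaD iD.
  by rewrite prodr_const; congr (_ ^+ _); apply: eq_card => i; rewrite !inE.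
rewrite [RHS](eq_bigr eta) => [|i /andP[_ /negbTE iD]]; last by rewrite /etaD iD.
by apply: eq_bigl => i; rewrite !inE andbC.
Qed.

Lemma phi_set0 D : phi tau eta D set0 = 1.
Proof.
by rewrite phi_antichain ?big_set0 //; apply/setP => u; rewrite !inE.
Qed.

Lemma pi_poly_mins Y D : mins_below Y ->
  pi_poly tau eta Y D = \prod_(i in mins Y) (1 + etaD D i *: 'X)
    + \sum_(I | downclosed_in (Y :\: mins Y) I && (I != set0))
        phi tau eta D (mins Y :|: I) *: 'X^#|mins Y :|: I|.
Proof.
move=> below; rewrite /pi_poly (bigID (fun I => I \subset mins Y)) /=.
congr (_ + _).
  rewrite prod_lin_subsets; apply: eq_big => [I | I /andP[_ IL]].
    by apply/andP/idP => [[] // | IL]; split=> //; apply: downclosed_sub_mins.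
  by rewrite phi_antichain ?(maxs_sub_mins IL).
rewrite (reindex_onto (fun I => mins Y :|: I) (fun I => I :\: mins Y)) /=.
  apply: eq_bigl => I; rewrite setDUl setDv set0U subUset subxx /=.
  have [IL | IL] := boolP [disjoint I & mins Y].
    by rewrite downclosed_minsU // (setDidPl IL) eqxx andbT -setD_eq0 (setDidPl IL).
  have -> : (I :\: mins Y == I) = false.
    by apply/negbTE; apply: contra IL => /eqP/setDidPl.
  rewrite andbF; apply/esym/negbTE; apply: contra IL => /andP[/downclosed_inP[IY _] _].
  by case/subsetDP: IY.
move=> I /andP[Idc IL]; have LI := mins_sub_downclosed below Idc IL.
apply/setP => x; rewrite in_setU in_setD.
by case: (boolP (x \in mins Y)) => //= xL; rewrite (subsetP LI).
Qed.

Lemma downclosed_set1 Y w : downclosed_in Y [set w] = (w \in mins Y).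
Proof.
apply/downclosed_inP/minsP => -[wY minw]; split; first by rewrite -sub1set.
- move=> z zY; apply/negP => zw; have := minw w z (set11 w) zY (ltW zw).
  by rewrite inE => /eqP zw'; rewrite zw' ltxx in zw.
- by rewrite sub1set.
move=> i j /set1P -> jY jw; rewrite inE; move: (minw j jY).
by rewrite lt_def jw andbT negbK eq_sym.
Qed.

Lemma coef_pi_poly Y D k :
  (pi_poly tau eta Y D)`_k = \sum_(I | downclosed_in Y I && (#|I| == k)) phi tau eta D I.
Proof.
rewrite /pi_poly coef_sum [RHS]big_mkcondr; apply: eq_bigr => I _.
by rewrite coefZ coefXn eq_sym; case: (_ == _); rewrite ?mulr1 ?mulr0.
Qed.

Lemma coef0_pi_poly Y D : (pi_poly tau eta Y D)`_0 = 1.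
Proof.
rewrite coef_pi_poly (big_pred1 set0) ?phi_set0 // => I.
rewrite cards_eq0 /=; case: eqP => [-> | _]; last by rewrite andbF.
by rewrite downclosed_sub_mins ?sub0set.
Qed.

Lemma coef1_pi_poly Y D :
  (pi_poly tau eta Y D)`_1 = \sum_(w in mins Y) etaD D w.
Proof.
rewrite coef_pi_poly (eq_bigl _ _ (fun I => andbC _ _)) big_mkcondr big_cards1.
rewrite [RHS]big_mkcond; apply: eq_bigr => w _; rewrite downclosed_set1.
case: ifP => // wL; rewrite phi_antichain ?big_set1 //.
by apply: (@maxs_sub_mins _ _ Y); rewrite sub1set.
Qed.

Lemma pi_poly_mins_meet Y D u : mins_below Y -> u \in mins Y -> u \in D ->
  pi_poly tau eta Y D = \prod_(i in mins Y) (1 + etaD D i *: 'X).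
Proof.
move=> below uL uD; rewrite pi_poly_mins // [X in _ + X]big1 ?addr0 // => I.
case/andP=> /downclosed_inP[IY _] I0; rewrite /phi maxs_minsU //.
case: ifP => [/subsetP sub | _]; last by rewrite scale0r.
have /(subsetP (maxs_sub I)) /(subsetP IY) : u \in maxs I.
  by rewrite sub // in_setI in_setU uL uD.
by rewrite inE uL.
Qed.

Lemma phi_minsU Y D I : mins_below Y -> [disjoint D & mins Y] ->
  I \subset Y :\: mins Y -> I != set0 ->
  phi tau eta D (mins Y :|: I) = (\prod_(i in mins Y) tau i) * phi tau eta D I.
Proof.
move=> below DL IY I0; have [_ IL] := subsetDP IY; rewrite /phi maxs_minsU //.
rewrite setIUl (disjoint_setI0 (_ : [disjoint mins Y & D])) ?set0U; last first.
  by rewrite disjoint_sym.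
case: ifP => _; last by rewrite mulr0.
rewrite setDUl (setDidPl (_ : [disjoint mins Y & maxs I])); last first.
  by rewrite disjoint_sym (disjointWl (maxs_sub I)).
rewrite (eq_bigl [predU mins Y & I :\: maxs I]) => [|i]; last by rewrite in_setU.
rewrite bigU /=; last by rewrite disjoint_sym (disjointWl (subsetDl I _)).
by rewrite !mulrA [_ * \prod_(i in mins Y) _]mulrC.
Qed.

Lemma pi_poly_mins_disjoint Y D : mins_below Y -> [disjoint D & mins Y] ->
  pi_poly tau eta Y D = \prod_(i in mins Y) (1 + eta i *: 'X)
    + ((\prod_(i in mins Y) tau i) *: 'X^#|mins Y|)
        * (pi_poly tau eta (Y :\: mins Y) D - 1).
Proof.
move=> below DL; rewrite pi_poly_mins //; congr (_ + _).
  by apply: eq_bigr => i iL; rewrite /etaD (disjointFl DL iL).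
rewrite [pi_poly _ _ (Y :\: mins Y) D](bigD1 set0) ?downclosed_sub_mins ?sub0set //=.
rewrite phi_set0 cards0 scale1r addrC addrK mulr_sumr; apply: eq_big => // I.
case/andP=> /downclosed_inP[IY _] I0.
have [_ IL] := subsetDP IY.
rewrite phi_minsU // -scalerAl -scalerAr scalerA -exprD cardsU.
by rewrite disjoint_setI0 ?cards0 ?subn0 // disjoint_sym.
Qed.

End IdealDecomposition.

Section Characterization.
Variables (d : Order.disp_t) (T : finPOrderType d) (K : fieldType)
  (tau eta : T -> K).
Hypotheses (tau_neq0 : forall i, tau i != 0) (eta_neqN1 : forall i, eta i != -1).
Implicit Types (Y C D : {set T}) (u v : T).

Local Notation pi := (pi_poly tau eta).
Local Notation etaD := (etaD eta).

Definition upclosed_in Y C : bool :=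
  (C \subset Y) && [forall c in C, forall z in Y, (c <= z)%O ==> (z \in C)].

Definition pi_card_invariant Y : Prop := forall C D,
  upclosed_in Y C -> upclosed_in Y D -> #|C| = #|D| -> pi Y C = pi Y D.

Definition pi_card_faithful Y : Prop := forall C D,
  upclosed_in Y C -> upclosed_in Y D -> pi Y C = pi Y D <-> #|C| = #|D|.

Definition hierarchical_in Y : Prop := forall u v, u \in Y -> v \in Y ->
  (len_in Y u < len_in Y v)%N -> (u <= v)%O.

Definition eta_levelled_in Y : Prop := forall u v, u \in Y -> v \in Y ->
  len_in Y u = len_in Y v -> eta u = eta v.

Lemma upclosed_inP Y C : reflect
  (C \subset Y /\ forall c z, c \in C -> z \in Y -> (c <= z)%O -> z \in C)
  (upclosed_in Y C).
Proof.
apply: (iffP andP) => -[CY Cup]; split=> //.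
  by move=> c z cC zY; move/forall_inP: Cup => /(_ c cC) /forall_inP /(_ z zY) /implyP.
by apply/forall_inP => c cC; apply/forall_inP => z zY; apply/implyP; apply: Cup.
Qed.

Lemma upclosed_inT C : upclosed_in setT C = upclosed C.
Proof.
apply/upclosed_inP/forall_inP => [[_ Cup] c cC | Cup]; last first.
  by split=> [|c z cC _]; [exact: subsetT | move/forallP: (Cup c cC) => /(_ z) /implyP].
by apply/forallP => z; apply/implyP; apply: Cup.
Qed.

Lemma upclosed_in_setD_mins Y C : upclosed_in (Y :\: mins Y) C -> upclosed_in Y C.
Proof.
case/upclosed_inP => CY' Cup; have [CY CL] := subsetDP CY'.
apply/upclosed_inP; split=> // c z cC zY cz.
have zL : z \notin mins Y.
  apply: contraTN (cC) => zL.
  by rewrite (mins_le_eq zL (subsetP CY c cC) cz) (disjointFl CL zL).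
by apply: Cup cz; rewrite // inE zL.
Qed.

Lemma upclosed_in_disjoint_mins Y C : upclosed_in Y C -> [disjoint C & mins Y] ->
  upclosed_in (Y :\: mins Y) C.
Proof.
case/upclosed_inP => CY Cup CL; apply/upclosed_inP.
by split=> [|c z cC /setDP[zY _]]; [apply/subsetDP | apply: Cup].
Qed.

Lemma upclosed_in_meet_mins Y C u : mins_below Y -> upclosed_in Y C ->
  u \in mins Y -> u \in C -> #|C| = (#|Y :\: mins Y| + #|mins Y :&: C|)%N.
Proof.
move=> below /upclosed_inP[CY Cup] uL uC.
have -> : Y :\: mins Y = C :\: mins Y.
  apply/setP => x; rewrite !in_setD; case: (boolP (x \in mins Y)) => //= xL.
  apply/idP/idP => [xY | /(subsetP CY)//].
  by apply: (Cup u x uC xY (below u x uL _)); rewrite in_setD xL.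
by rewrite setIC addnC cardsID.
Qed.

Lemma eq_pi_poly_setD_mins Y C D : mins_below Y ->
  [disjoint C & mins Y] -> [disjoint D & mins Y] ->
  (pi Y C = pi Y D) <-> (pi (Y :\: mins Y) C = pi (Y :\: mins Y) D).
Proof.
move=> below CL DL.
rewrite (pi_poly_mins_disjoint tau eta below CL) (pi_poly_mins_disjoint tau eta below DL).
split=> [|-> //].
have c_neq0 : (\prod_(i in mins Y) tau i) *: 'X^#|mins Y| != 0 :> {poly K}.
  rewrite scaler_eq0 negb_or monic_neq0 ?monicXn // andbT.
  by apply/prodf_neq0 => i _; apply: tau_neq0.
by move/addrI/(mulfI c_neq0)/subIr.
Qed.

Lemma len_in_eq1 Y y : y \in Y -> (len_in Y y == 1%N) = (y \in mins Y).
Proof.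
move=> yY; case: (boolP (y \in mins Y)) => [yL | yL]; first by rewrite len_in_mins.
by apply/negbTE; rewrite neq_ltn orbC len_in_nonmin // inE yL.
Qed.

Lemma hierarchical_inE Y :
  hierarchical_in Y <-> mins_below Y /\ hierarchical_in (Y :\: mins Y).
Proof.
have LY := subsetP (mins_sub Y).
split=> [hierY | [below hierY'] u v uY vY uv].
  have below : mins_below Y.
    move=> u v uL vY'; have [vY _] := setDP vY'.
    by apply: hierY (LY u uL) vY _; rewrite len_in_mins // len_in_nonmin.
  split=> // u v uY' vY' uv; have [[uY _] [vY _]] := (setDP uY', setDP vY').
  by apply: hierY; rewrite // (len_in_setD_mins below uY') (len_in_setD_mins below vY').
have vY' : v \in Y :\: mins Y.
  rewrite inE vY andbT -(len_in_eq1 vY) neq_ltn orbC; apply/orP; left.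
  by apply: leq_trans uv; rewrite ltnS len_in_gt0.
case: (boolP (u \in mins Y)) => [uL | uL]; first exact: below.
have uY' : u \in Y :\: mins Y by rewrite inE uL.
apply: hierY' => //.
by rewrite -ltnS -(len_in_setD_mins below uY') -(len_in_setD_mins below vY').
Qed.

Lemma eta_levelled_inE Y : mins_below Y ->
  eta_levelled_in Y <->
  {in mins Y &, forall u v, eta u = eta v} /\ eta_levelled_in (Y :\: mins Y).
Proof.
move=> below; have LY := subsetP (mins_sub Y).
have shift y : y \in Y -> y \notin mins Y -> len_in Y y = (len_in (Y :\: mins Y) y).+1.
  by move=> yY yL; rewrite len_in_setD_mins // inE yL.
split=> [levY | [etaL levY'] u v uY vY uv].
  split=> [u v uL vL | u v /setDP[uY uL] /setDP[vY vL] uv].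
    by apply: levY; rewrite ?LY ?len_in_mins.
  by apply: levY; rewrite // !shift // uv.
have := len_in_eq1 uY; rewrite uv (len_in_eq1 vY).
case: (boolP (v \in mins Y)) => [vL /esym uL | vL /esym/negbT uL]; first exact: etaL.
apply: levY'; rewrite ?in_setD ?uL ?vL //.
by apply: succn_inj; rewrite -!shift.
Qed.

Lemma pi_card_invariant_mins_below Y : pi_card_invariant Y -> mins_below Y.
Proof.
move=> inv u v uL /setDP[vY vL]; apply/negPn/negP => nuv.
have uY := subsetP (mins_sub Y) u uL.
(* C and D have the same size and differ on mins Y only at u, which lies in C
   but not in D, so their coefficients of X differ by -1 - eta u. *)
set C := Y :\: [set z | (z <= v)%O].
set D := Y :\: [set z | (z < v)%O || (z == u)].
have upC : upclosed_in Y C.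
  apply/upclosed_inP; split=> [|c z]; first exact: subsetDl.
  rewrite !in_setD !inE => /andP[ncv _] zY cz; rewrite zY andbT.
  by apply: contra ncv; apply: le_trans.
have upD : upclosed_in Y D.
  apply/upclosed_inP; split=> [|c z]; first exact: subsetDl.
  rewrite !in_setD !inE negb_or => /andP[/andP[ncv ncu] cY] zY cz.
  rewrite zY andbT negb_or; apply/andP; split.
    by apply: contra ncv; apply: le_lt_trans.
  by apply: contra ncu => /eqP zu; rewrite (mins_le_eq uL cY) // -zu.
have cardCD : #|C| = #|D|.
  have splitY A : #|Y| = (#|Y :&: A| + #|Y :\: A|)%N by rewrite cardsID.
  have := splitY [set z | (z <= v)%O]; rewrite (splitY [set z | (z < v)%O || (z == u)]).
  suff -> : #|Y :&: [set z | (z <= v)%O]| = #|Y :&: [set z | (z < v)%O || (z == u)]|.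
    by move/eqP; rewrite eqn_add2l => /eqP.
  have -> : Y :&: [set z | (z <= v)%O] = v |: (Y :&: [set z | (z < v)%O]).
    by apply/setP => x; rewrite !inE le_eqVlt; case: eqVneq => [-> | _] //=; rewrite vY.
  have -> : Y :&: [set z | (z < v)%O || (z == u)] = u |: (Y :&: [set z | (z < v)%O]).
    by apply/setP => x; rewrite !inE; case: eqVneq => [-> | _]; rewrite ?uY ?orbT ?orbF.
  by rewrite !cardsU1 !inE ltxx andbF (negbTE (contra (@ltW _ _ u v) nuv)) andbF.
have := congr1 (fun p : {poly K} => p`_1) (inv C D upC upD cardCD).
rewrite !coef1_pi_poly !(big_setD1 u uL) /=.
rewrite (eq_bigr (etaD D)) => [|w /setD1P[wu wL]]; last first.
  have wv : w != v by apply: contraNneq vL => <-.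
  by rewrite /etaD !in_setD !inE (negbTE wu) orbF le_eqVlt (negbTE wv).
move/addIr; rewrite /etaD !in_setD !inE uY eqxx orbT nuv /= => E.
by move: (eta_neqN1 u); rewrite -E eqxx.
Qed.

Lemma pi_card_invariant_eta_mins Y : pi_card_invariant Y ->
  {in mins Y &, forall u v, eta u = eta v}.
Proof.
move=> inv u v uL vL; have [-> // | uv] := eqVneq u v.
have LY := subsetP (mins_sub Y).
have upD1 w : w \in mins Y -> upclosed_in Y (Y :\ w).
  move=> wL; apply/upclosed_inP; split=> [|c z]; first exact: subsetDl.
  rewrite !in_setD1 => /andP[cw cY] zY cz; rewrite zY andbT.
  by apply: contraNneq cw => zw; rewrite -(mins_le_eq wL cY) -?zw.
have cardE : #|Y :\ u| = #|Y :\ v|.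
  by move: (cardsD1 u Y); rewrite {1}(cardsD1 v Y) (LY u uL) (LY v vL) => /addnI.
have := congr1 (fun p : {poly K} => p`_1) (inv _ _ (upD1 u uL) (upD1 v vL) cardE).
have vLu : v \in mins Y :\ u by rewrite in_setD1 eq_sym uv vL.
rewrite !coef1_pi_poly !(big_setD1 u uL) !(big_setD1 v vLu) /=.
rewrite (eq_bigr (etaD (Y :\ v))) => [|w /setD1P[wv /setD1P[wu wL]]]; last first.
  by rewrite /etaD !in_setD1 wu wv.
rewrite /etaD !in_setD1 !eqxx (eq_sym v u) (negbTE uv) !LY //=.
by rewrite addrCA => /addrI /addIr.
Qed.

Lemma pi_card_invariant_setD_mins Y : mins_below Y -> pi_card_invariant Y ->
  pi_card_invariant (Y :\: mins Y).
Proof.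
move=> below inv C D upC upD cardCD.
have [CY' CL] := subsetDP (proj1 (upclosed_inP _ _ upC)).
have [DY' DL] := subsetDP (proj1 (upclosed_inP _ _ upD)).
by apply/(eq_pi_poly_setD_mins below CL DL)/inv => //; apply: upclosed_in_setD_mins.
Qed.

Lemma pi_card_invariant_levels Y : pi_card_invariant Y ->
  hierarchical_in Y /\ eta_levelled_in Y.
Proof.
have [n] := ubnP #|Y|; elim: n Y => // n IH Y /ltnSE leYn inv.
have [-> | Y0] := eqVneq Y set0; first by split=> u v; rewrite inE.
have below := pi_card_invariant_mins_below inv.
have [hierY' levY'] := IH (Y :\: mins Y) (leq_trans (card_setD_mins Y0) leYn)
  (pi_card_invariant_setD_mins below inv).
split; first exact/hierarchical_inE.
by apply/(eta_levelled_inE below); split=> //; apply: pi_card_invariant_eta_mins.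
Qed.

Lemma pi_poly_levelled_disjoint Y C e : mins_below Y ->
  {in mins Y, forall i, eta i = e} -> [disjoint C & mins Y] ->
  pi Y C = (1 + e *: 'X) ^+ #|mins Y|
    + ((\prod_(i in mins Y) tau i) *: 'X^#|mins Y|) * (pi (Y :\: mins Y) C - 1).
Proof.
move=> below etaL CL; rewrite (pi_poly_mins_disjoint tau eta below CL).
by rewrite (eq_bigr (fun=> 1 + e *: 'X)) ?prodr_const // => i /etaL ->.
Qed.

Lemma pi_poly_levelled_meet Y C e u : mins_below Y ->
  {in mins Y, forall i, eta i = e} -> u \in mins Y -> u \in C ->
  pi Y C = (1 + (-1) *: 'X) ^+ #|mins Y :&: C| * (1 + e *: 'X) ^+ #|mins Y :\: C|.
Proof.
move=> below etaL uL uC; rewrite (pi_poly_mins_meet tau eta below uL uC) (bigID (mem C)) /=.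
congr (_ * _); rewrite -prodr_const; apply: eq_big => [i | i].
- by rewrite !inE.
- by case/andP=> _ iC; rewrite /etaD iC.
- by rewrite !inE andbC.
- by case/andP=> /etaL <- /negbTE iC; rewrite /etaD iC.
Qed.

Lemma pi_poly_levelled_mixed Y C D e u : mins_below Y ->
  {in mins Y, forall i, eta i = e} -> e != -1 ->
  upclosed_in Y C -> upclosed_in Y D -> [disjoint C & mins Y] ->
  u \in mins Y -> u \in D -> pi Y C <> pi Y D /\ #|C| <> #|D|.
Proof.
move=> below etaL e_neqN1 upC upD CL uL uD.
have LD_gt0 : (0 < #|mins Y :&: D|)%N by apply/card_gt0P; exists u; rewrite inE uL.
split; apply/eqP.
  rewrite (pi_poly_levelled_disjoint below etaL CL).
  rewrite (pi_poly_levelled_meet below etaL uL uD) lin_exp_shift_neq ?cardsID //.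
  by rewrite coefB coef0_pi_poly coefC subrr.
rewrite (upclosed_in_meet_mins below upD uL uD) neq_ltn; apply/orP; left.
have [CY _] := upclosed_inP _ _ upC.
by rewrite -addn1 leq_add ?subset_leq_card //; apply/subsetDP.
Qed.

Lemma eq_pi_poly_levelled_meet Y C D e u v : mins_below Y ->
  {in mins Y, forall i, eta i = e} -> e != -1 ->
  upclosed_in Y C -> upclosed_in Y D ->
  u \in mins Y -> u \in C -> v \in mins Y -> v \in D ->
  pi Y C = pi Y D <-> #|C| = #|D|.
Proof.
move=> below etaL e_neqN1 upC upD uL uC vL vD.
rewrite (pi_poly_levelled_meet below etaL uL uC) (pi_poly_levelled_meet below etaL vL vD).
rewrite (upclosed_in_meet_mins below upC uL uC) (upclosed_in_meet_mins below upD vL vD).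
split=> [/(congr1 (mup 1)) | /addnI cardLCD]; first by rewrite !mup1_lin_exp2 // => ->.
suff -> : #|mins Y :\: C| = #|mins Y :\: D| by rewrite cardLCD.
by apply/eqP; rewrite -(eqn_add2l #|mins Y :&: C|) cardsID cardLCD cardsID.
Qed.

Lemma hierarchical_pi_card_faithful Y : hierarchical_in Y -> eta_levelled_in Y ->
  pi_card_faithful Y.
Proof.
have [n] := ubnP #|Y|; elim: n Y => // n IH Y /ltnSE leYn hierY levY.
have [-> | Y0] := eqVneq Y set0.
  by move=> C D /upclosed_inP[+ _] /upclosed_inP[+ _]; rewrite !subset0 => /eqP-> /eqP->.
have [below hierY'] := (hierarchical_inE Y).1 hierY.
have [etaL levY'] := (eta_levelled_inE below).1 levY.
have /set0Pn[u0 u0L] := mins_neq0 Y0.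
have etaE : {in mins Y, forall i, eta i = eta u0} by move=> i iL; apply: etaL.
have faithY' : pi_card_faithful (Y :\: mins Y).
  by apply: IH => //; apply: leq_trans (card_setD_mins Y0) leYn.
move=> C D upC upD.
have mixed := pi_poly_levelled_mixed below etaE (eta_neqN1 u0).
have [CL | ] := boolP [disjoint C & mins Y]; last rewrite -setI_eq0.
all: have [DL | ] := boolP [disjoint D & mins Y]; last rewrite -setI_eq0.
- rewrite eq_pi_poly_setD_mins //.
  by apply: faithY'; apply: upclosed_in_disjoint_mins.
- case/set0Pn=> v /setIP[vD vL].
  by have [nP nC] := mixed C D v upC upD CL vL vD; split; [move/nP | move/nC].
- case/set0Pn=> u /setIP[uC uL].
  by have [nP nC] := mixed D C u upD upC DL uL uC; split=> /esym; [move/nP | move/nC].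
case/set0Pn=> v /setIP[vD vL] /set0Pn[u /setIP[uC uL]].
exact: eq_pi_poly_levelled_meet below etaE (eta_neqN1 u0) upC upD uL uC vL vD.
Qed.

End Characterization.

Lemma hierarchical_inT d (T : finPOrderType d) :
  hierarchical_in [set: T] <-> hierarchical T.
Proof.
split=> hierT u v; first by rewrite addn1 -!len_inT => uv; apply: hierT; rewrite ?inE.
by move=> _ _; rewrite !len_inT -addn1; apply: hierT.
Qed.

Lemma eta_levelled_inT d (T : finPOrderType d) (K : fieldType) (eta : T -> K) :
  eta_levelled_in eta [set: T] <-> forall u v, len u = len v -> eta u = eta v.
Proof.
split=> levT u v; first by rewrite -!len_inT => uv; apply: levT; rewrite ?inE.
by move=> _ _; rewrite !len_inT; apply: levT.
Qed.

Theorem theorem3p3 (d : Order.disp_t) (T : finPOrderType d) (K : fieldType)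
  (tau eta : T -> K)
  (Htau : forall i : T, tau i != 0)
  (Heta : forall i : T, eta i != -1) :
  let P1 := forall C D : {set T}, upclosed C -> upclosed D ->
              #|C| = #|D| -> pi_poly tau eta setT C = pi_poly tau eta setT D in
  let P2 := forall C D : {set T}, upclosed C -> upclosed D ->
              (pi_poly tau eta setT C = pi_poly tau eta setT D <-> #|C| = #|D|) in
  let P3 := hierarchical T /\
              (forall u v : T, len u = len v -> eta u = eta v) in
  (P1 <-> P2) /\ (P2 <-> P3).
Proof.
move=> P1 P2 P3.
have P1E : P1 <-> pi_card_invariant tau eta [set: T].
  by split=> inv C D; rewrite ?upclosed_inT => upC upD;
    apply: inv; rewrite ?upclosed_inT.
have P2E : P2 <-> pi_card_faithful tau eta [set: T].
  by split=> faith C D; rewrite ?upclosed_inT => upC upD;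
    apply: faith; rewrite ?upclosed_inT.
have P3E : P3 <-> hierarchical_in [set: T] /\ eta_levelled_in eta [set: T].
  by rewrite hierarchical_inT eta_levelled_inT.
have P1_P3 : P1 -> P3 by move/P1E/(pi_card_invariant_levels Htau Heta)/P3E.
have P3_P2 : P3 -> P2.
  by move/P3E => [hierT levT]; apply/P2E; apply: hierarchical_pi_card_faithful.
have P2_P1 : P2 -> P1 by move=> faith C D upC upD /(faith C D upC upD).
split; split.
- by move/P1_P3/P3_P2.
- exact: P2_P1.
- by move/P2_P1/P1_P3.
- exact: P3_P2.
Qed.
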